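(* Suppose Assumption 1 holds. Let $J\subseteq\{1,\dots,q\}$ with $|J|\le q^*$ and $J_0\setminus J\neq\emptyset$, and let $l=|J_0\setminus J|$. Then $$\|\Pi_{J_0}f\|^2-\|\Pi_Jf\|^2=\|f-\Pi_Jf\|^2\ge(1-\rho_{q^*}^2)\kappa_l.$$
   Context: Let $q\ge1$ and let $(Y,X)$ be a pair of random variables with $X=(X_1,\dots,X_q)^T$, each $X_j$ real-valued, and $Y=\sum_{j=1}^q f_j(X_j)+\epsilon$, where $f_j\in L^2(\mathbb P^{X_j})$, $\mathbb E[f_j(X_j)]=0$ for $j=1,\dots,q-1$, and $\epsilon$ is a centered Gaussian variable with variance $\sigma^2$, independent of $X$. Write $f(x)=\sum_{j=1}^qf_j(x_j)$. The space $L^2(\mathbb P^X)$ carries the inner product $\langle g,h\rangle=\mathbb E[g(X)h(X)]$ and norm $\|g\|=\langle g,g\rangle^{1/2}$. Let $H_q=L^2(\mathbb P^{X_q})$ and $H_j=\{h\in L^2(\mathbb P^{X_j}):\mathbb E[h(X_j)]=0\}$ for $j<q$, viewed as subspaces of $L^2(\mathbb P^X)$ via $x\mapsto h(x_j)$; for $J\subseteq\{1,\dots,q\}$ let $H_J=\sum_{j\in J}H_j$ (with $H_\emptyset=\{0\}$). Under Assumption 1 the spaces $H_J$ with $|J|\le 2q^*$ are closed, and $\Pi_J$ denotes the orthogonal projection of $L^2(\mathbb P^X)$ onto $H_J$. Let $J_0=\{j:\|f_j\|>0\}$, $s=|J_0|$, and let $q^*$ be an integer with $s\le q^*$. Let $\rho_{q^*}$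 be the supremum of $\langle h_1,h_2\rangle/(\|h_1\|\|h_2\|)$ over all nonzero $h_1\in H_{J_1}$, $h_2\in H_{J_2}$ and all $J_1,J_2\subseteq\{1,\dots,q\}$ with $J_1\cap J_2=\emptyset$ and $|J_1|,|J_2|\le q^*$. Assumption 1 is the condition $\rho_{q^*}<1$. For $1\le l\le s$, $\kappa_l=\min_{J'\subseteq J_0,|J'|=l}\|\sum_{j\in J'}f_j\|^2$. *)

(* real numbers from Stdlib Reals.
   mathcomp-analysis / measure theory is not available, so L^2(P^X) is
   modelled as an abstract real inner-product space. *)
From Stdlib Require Import Reals List Arith.
Import ListNotations.
Open Scope R_scope.

Record IPS := {
  car :> Type;
  vzero : car;
  vadd : car -> car -> car;
  vopp : car -> car;
  vscal : R -> car -> car;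
  ip : car -> car -> R;
  vadd_comm : forall x y, vadd x y = vadd y x;
  vadd_assoc : forall x y z, vadd x (vadd y z) = vadd (vadd x y) z;
  vadd_0 : forall x, vadd x vzero = x;
  vadd_opp : forall x, vadd x (vopp x) = vzero;
  vscal_1 : forall x, vscal 1 x = x;
  vscal_assoc : forall a b x, vscal a (vscal b x) = vscal (a * b) x;
  vscal_distr_v : forall a x y, vscal a (vadd x y) = vadd (vscal a x) (vscal a y);
  vscal_distr_s : forall a b x, vscal (a + b) x = vadd (vscal a x) (vscal b x);
  ip_sym : forall x y, ip x y = ip y x;
  ip_add_l : forall x y z, ip (vadd x y) z = ip x z + ip y z;
  ip_scal_l : forall a x y, ip (vscal a x) y = a * ip x y;
  ip_pos : forall x, 0 <= ip x x;
  ip_def : forall x, ip x x = 0 -> x = vzero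
}.

Arguments vzero {_}.
Arguments vadd {_} _ _.
Arguments vopp {_} _.
Arguments vscal {_} _ _.
Arguments ip {_} _ _.

Definition vsub {V : IPS} (x y : V) : V := vadd x (vopp y).

Definition norm {V : IPS} (x : V) : R := sqrt (ip x x).

Definition sumV {V : IPS} (J : list nat) (F : nat -> V) : V :=
  fold_right (fun j acc => vadd (F j) acc) vzero J.

Definition is_subspace {V : IPS} (S : V -> Prop) : Prop :=
  S vzero /\ (forall x y, S x -> S y -> S (vadd x y)) /\
  (forall a x, S x -> S (vscal a x)).

Definition index_set (q : nat) (J : list nat) : Prop :=
  NoDup J /\ forall j, In j J -> (1 <= j <= q)%nat.

Definition inHJ {V : IPS} (H : nat -> V -> Prop) (J : list nat) (g : V) : Prop :=
  exists hs : nat -> V, (forall j, In j J -> H j (hs j)) /\ g = sumV J hs.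

(* Pi J is the orthogonal projection onto H_J, for every J subset {1..q}
   with |J| <= 2 q* (these H_J are closed under Assumption 1). *)
Definition is_proj_family {V : IPS} (q qstar : nat) (H : nat -> V -> Prop)
  (Pi : list nat -> V -> V) : Prop :=
  forall J, index_set q J -> (length J <= 2 * qstar)%nat ->
    forall g, inHJ H J (Pi J g) /\
              (forall h, inHJ H J h -> ip (vsub g (Pi J g)) h = 0).

(* The value 0 is added so that the supremum is 0 (rather than undefined)
   when this set is empty (q = 1); when the set is nonempty it is symmetric
   under h1 -> -h1, so its supremum is >= 0 and adding 0 changes nothing. *)
Definition rho_set {V : IPS} (q qstar : nat) (H : nat -> V -> Prop) (c : R) : Prop :=
  c = 0 \/
  exists J1 J2 (h1 h2 : V),
    index_set q J1 /\ index_set q J2 /\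
    (forall j, In j J1 -> ~ In j J2) /\
    (length J1 <= qstar)%nat /\ (length J2 <= qstar)%nat /\
    inHJ H J1 h1 /\ inHJ H J2 h2 /\ h1 <> vzero /\ h2 <> vzero /\
    c = ip h1 h2 / (norm h1 * norm h2).

Definition is_J0 {V : IPS} (q : nat) (fj : nat -> V) (J0 : list nat) : Prop :=
  NoDup J0 /\ forall j, In j J0 <-> ((1 <= j <= q)%nat /\ norm (fj j) > 0).

Definition ldiff (A B : list nat) : list nat :=
  filter (fun j => negb (existsb (Nat.eqb j) B)) A.

Definition is_min (P : R -> Prop) (m : R) : Prop :=
  P m /\ forall x, P x -> m <= x.

Definition kappa_set {V : IPS} (fj : nat -> V) (J0 : list nat) (l : nat) (x : R) : Prop :=
  exists J', NoDup J' /\ incl J' J0 /\ length J' = l /\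
             x = norm (sumV J' fj) ^ 2.

(* Write d = f - Pi_J f and split f = f_{J0 ∩ J} + g with g = sum_{j in J0 \ J} f_j.
   Then d = g + h with h = f_{J0 ∩ J} - Pi_J f in H_J, while g lies in H_{J0 \ J};
   these index sets are disjoint and of size at most q*, so <g,-h> <= rho ||g|| ||h||.
   Hence ||d||^2 = ||g||^2 + 2<g,h> + ||h||^2 >= (||h|| - rho ||g||)^2 + (1 - rho^2) ||g||^2
   >= (1 - rho^2) kappa_l. The identity is Pythagoras, as f lies in H_{J0}. *)
From Stdlib Require Import Reals List Arith.
From Stdlib Require Import Permutation Lra Psatz Classical.
Open Scope R_scope.

Arguments vadd_comm {_}. Arguments vadd_assoc {_}. Arguments vadd_0 {_}.
Arguments vadd_opp {_}. Arguments vscal_1 {_}. Arguments vscal_distr_v {_}.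
Arguments vscal_distr_s {_}. Arguments ip_sym {_}. Arguments ip_add_l {_}.
Arguments ip_scal_l {_}. Arguments ip_pos {_}. Arguments ip_def {_}.

Section InnerProductSpace.
Variable V : IPS.

Lemma vadd_0_l (x : V) : vadd vzero x = x.
Proof. rewrite vadd_comm; apply vadd_0. Qed.

Lemma vadd_id_r (x y : V) : vadd x y = x -> y = vzero.
Proof.
  intro E.
  assert (E2 : vadd (vopp x) (vadd x y) = vadd (vopp x) x) by now rewrite E.
  now rewrite vadd_assoc, (vadd_comm (vopp x) x), vadd_opp, vadd_0_l in E2.
Qed.

Lemma vscal_0 (x : V) : vscal 0 x = vzero.
Proof.
  apply (vadd_id_r (vscal 0 x)). rewrite <- vscal_distr_s. f_equal; ring.
Qed.

Lemma vscal_zero (a : R) : vscal a (@vzero V) = vzero.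
Proof.
  apply (vadd_id_r (vscal a vzero)). now rewrite <- vscal_distr_v, vadd_0.
Qed.

Lemma vopp_scal (x : V) : vopp x = vscal (-1) x.
Proof.
  assert (E : vadd x (vscal (-1) x) = vzero).
  { rewrite <- (vscal_1 x) at 1. rewrite <- vscal_distr_s.
    replace (1 + -1) with 0 by ring. apply vscal_0. }
  assert (E2 : vadd (vopp x) (vadd x (vscal (-1) x)) = vopp x)
    by now rewrite E, vadd_0.
  now rewrite vadd_assoc, (vadd_comm (vopp x) x), vadd_opp, vadd_0_l in E2.
Qed.

Lemma vsub_add (x y : V) : vadd (vsub x y) y = x.
Proof.
  unfold vsub. now rewrite <- vadd_assoc, (vadd_comm (vopp y)), vadd_opp, vadd_0.
Qed.

Lemma ip_0_l (y : V) : ip vzero y = 0.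
Proof.
  assert (E : ip (vadd vzero vzero) y = ip (@vzero V) y) by now rewrite vadd_0.
  rewrite ip_add_l in E. lra.
Qed.

Lemma ip_0_r (x : V) : ip x vzero = 0.
Proof. rewrite ip_sym. apply ip_0_l. Qed.

Lemma ip_add_r (x y z : V) : ip x (vadd y z) = ip x y + ip x z.
Proof. now rewrite ip_sym, ip_add_l, !(ip_sym _ x). Qed.

Lemma ip_opp_l (x y : V) : ip (vopp x) y = - ip x y.
Proof. rewrite vopp_scal, ip_scal_l. ring. Qed.

Lemma ip_opp_r (x y : V) : ip x (vopp y) = - ip x y.
Proof. now rewrite ip_sym, ip_opp_l, ip_sym. Qed.

Lemma norm_sq (x : V) : norm x ^ 2 = ip x x.
Proof. apply pow2_sqrt, ip_pos. Qed.

Lemma norm_ge_0 (x : V) : 0 <= norm x.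
Proof. apply sqrt_pos. Qed.

Lemma norm_opp (x : V) : norm (vopp x) = norm x.
Proof. unfold norm. now rewrite ip_opp_l, ip_opp_r, Ropp_involutive. Qed.

Lemma norm_eq_0 (x : V) : norm x = 0 -> x = vzero.
Proof. intro E. apply ip_def, sqrt_eq_0; [apply ip_pos | exact E]. Qed.

Lemma norm_gt_0 (x : V) : x <> vzero -> 0 < norm x.
Proof.
  intro Hx. destruct (norm_ge_0 x) as [|E]; auto.
  now contradict Hx; apply norm_eq_0.
Qed.

Lemma norm_sq_sub_proj (f p : V) :
  ip (vsub f p) p = 0 -> norm f ^ 2 - norm p ^ 2 = norm (vsub f p) ^ 2.
Proof.
  intro Horth. rewrite !norm_sq. rewrite <- (vsub_add f p) at 1 2.
  rewrite ip_add_l, !ip_add_r, (ip_sym p (vsub f p)), Horth. ring.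
Qed.

Lemma orth_proj_fixed (S : V -> Prop) (f p : V) :
  S (vsub f p) -> (forall h, S h -> ip (vsub f p) h = 0) -> p = f.
Proof.
  intros HS Horth. rewrite <- (vsub_add f p) at 1.
  rewrite (ip_def _ (Horth _ HS)). symmetry. apply vadd_0_l.
Qed.

Lemma norm_add_sq_ge (g h : V) (rho : R) :
  0 <= rho -> - ip g h <= rho * norm g * norm h ->
  (1 - rho ^ 2) * norm g ^ 2 <= norm (vadd g h) ^ 2.
Proof.
  intros Hrho Hcorr.
  rewrite (norm_sq (vadd g h)), ip_add_l, !ip_add_r, (ip_sym h g), <- !norm_sq.
  pose proof (Rle_0_sqr (norm h - rho * norm g)). unfold Rsqr in *. nra.
Qed.

(* The correlation hypothesis only constrains nonzero vectors; [0 <= rho] covers the rest. *)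
Lemma neg_ip_le_of_correlation (g h : V) (rho : R) :
  0 <= rho ->
  (g <> vzero -> h <> vzero -> ip g (vopp h) / (norm g * norm (vopp h)) <= rho) ->
  - ip g h <= rho * norm g * norm h.
Proof.
  intros Hrho Hcorr.
  assert (Hnn : 0 <= rho * norm g * norm h)
    by (repeat apply Rmult_le_pos; auto using norm_ge_0).
  destruct (classic (g = vzero)) as [->|Hg].
  { rewrite ip_0_l. lra. }
  destruct (classic (h = vzero)) as [->|Hh].
  { rewrite ip_0_r. lra. }
  specialize (Hcorr Hg Hh). rewrite norm_opp, ip_opp_r in Hcorr.
  pose proof (norm_gt_0 g Hg). pose proof (norm_gt_0 h Hh).
  apply Rmult_le_compat_r with (r := norm g * norm h) in Hcorr; [|nra].
  unfold Rdiv in Hcorr. rewrite Rmult_assoc, Rinv_l in Hcorr by nra. lra.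
Qed.

Lemma sumV_add (L : list nat) (F G : nat -> V) :
  sumV L (fun j => vadd (F j) (G j)) = vadd (sumV L F) (sumV L G).
Proof.
  induction L as [|a L IH]; simpl; [now rewrite vadd_0|].
  rewrite IH, <- !vadd_assoc. f_equal. rewrite !vadd_assoc. f_equal. apply vadd_comm.
Qed.

Lemma sumV_scal (L : list nat) (a : R) (F : nat -> V) :
  sumV L (fun j => vscal a (F j)) = vscal a (sumV L F).
Proof.
  induction L as [|b L IH]; simpl; [now rewrite vscal_zero|].
  now rewrite IH, vscal_distr_v.
Qed.

Lemma sumV_zero (L : list nat) (F : nat -> V) :
  (forall j, In j L -> F j = vzero) -> sumV L F = vzero.
Proof.
  induction L as [|a L IH]; simpl; intros Hz; auto.
  rewrite Hz, IH by auto. apply vadd_0.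
Qed.

Lemma sumV_perm (L L' : list nat) (F : nat -> V) :
  Permutation L L' -> sumV L F = sumV L' F.
Proof.
  induction 1; simpl; try congruence.
  rewrite !vadd_assoc. f_equal. apply vadd_comm.
Qed.

Lemma sumV_filter (p : nat -> bool) (L : list nat) (F : nat -> V) :
  sumV L F =
  vadd (sumV (filter p L) F) (sumV (filter (fun j => negb (p j)) L) F).
Proof.
  induction L as [|a L IH]; simpl; [now rewrite vadd_0|].
  destruct (p a); simpl; rewrite IH; [apply vadd_assoc|].
  rewrite !vadd_assoc. f_equal. apply vadd_comm.
Qed.

End InnerProductSpace.

Lemma existsb_eqb_In (j : nat) (L : list nat) :
  existsb (Nat.eqb j) L = true <-> In j L.
Proof.
  rewrite existsb_exists. split.
  - intros [x [Hx E]]. now apply Nat.eqb_eq in E; subst.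
  - intros. exists j. split; auto. apply Nat.eqb_refl.
Qed.

Lemma In_ldiff (j : nat) (A B : list nat) :
  In j (ldiff A B) <-> In j A /\ ~ In j B.
Proof.
  unfold ldiff. rewrite filter_In, <- (existsb_eqb_In j B).
  split; intros [HA Hn]; split; auto.
  - intro HB. now rewrite HB in Hn.
  - destruct (existsb (Nat.eqb j) B); [now contradict Hn | reflexivity].
Qed.

Lemma ldiff_NoDup (A B : list nat) : NoDup A -> NoDup (ldiff A B).
Proof. apply NoDup_filter. Qed.

Lemma ldiff_incl (A B : list nat) : incl (ldiff A B) A.
Proof. intros j Hj. now apply In_ldiff in Hj. Qed.

Lemma ldiff_length (A B : list nat) : (length (ldiff A B) <= length A)%nat.
Proof. apply filter_length_le. Qed.

Lemma index_set_ldiff (q : nat) (A B : list nat) :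
  index_set q A -> index_set q (ldiff A B).
Proof.
  intros [HND Hr]. split; [now apply ldiff_NoDup|].
  intros j Hj. now apply Hr, ldiff_incl with B.
Qed.

Lemma sumV_support (V : IPS) (L S : list nat) (F : nat -> V) :
  NoDup L -> NoDup S -> incl S L ->
  (forall j, In j L -> ~ In j S -> F j = vzero) -> sumV L F = sumV S F.
Proof.
  intros HL HS Hincl Hz.
  rewrite (sumV_filter V (fun j => existsb (Nat.eqb j) S)).
  rewrite (sumV_zero V (filter (fun j => negb (existsb (Nat.eqb j) S)) L)), vadd_0.
  - apply sumV_perm, NoDup_Permutation; [now apply NoDup_filter | exact HS |].
    intro j. rewrite filter_In, (existsb_eqb_In j S). intuition.
  - intros j Hj. apply filter_In in Hj. destruct Hj as [Hj Hn].
    apply Hz; auto. rewrite <- (existsb_eqb_In j S). now destruct existsb.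
Qed.

Lemma is_J0_index_set (V : IPS) (q : nat) (fj : nat -> V) (J0 : list nat) :
  is_J0 q fj J0 -> index_set q J0.
Proof. intros [HND HJ0]. split; auto. intros j Hj. now apply HJ0 in Hj. Qed.

Lemma sumV_J0 (V : IPS) (q : nat) (fj : nat -> V) (J0 : list nat) :
  is_J0 q fj J0 -> sumV (seq 1 q) fj = sumV J0 fj.
Proof.
  intros HJ. pose proof (is_J0_index_set V q fj J0 HJ) as [HND Hr].
  apply sumV_support; auto using seq_NoDup.
  - intros j Hj. apply in_seq. specialize (Hr j Hj). lia.
  - intros j Hj Hn. apply in_seq in Hj. apply norm_eq_0.
    destruct HJ as [_ HJ0]. pose proof (norm_ge_0 V (fj j)).
    destruct (Req_dec (norm (fj j)) 0) as [|Hne]; auto.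
    contradict Hn. apply HJ0. split; [lia | lra].
Qed.

Section SumSpaces.
Variables (V : IPS) (H : nat -> V -> Prop).
Hypothesis H_subspace : forall j, is_subspace (H j).

Lemma inHJ_zero (J : list nat) : inHJ H J vzero.
Proof.
  exists (fun _ => vzero). split; [intros; apply H_subspace|].
  symmetry; now apply sumV_zero.
Qed.

Lemma inHJ_add (J : list nat) (x y : V) :
  inHJ H J x -> inHJ H J y -> inHJ H J (vadd x y).
Proof.
  intros [hx [Hx ->]] [hy [Hy ->]]. exists (fun j => vadd (hx j) (hy j)).
  split; [intros j Hj; apply H_subspace; auto | symmetry; apply sumV_add].
Qed.

Lemma inHJ_scal (J : list nat) (a : R) (x : V) :
  inHJ H J x -> inHJ H J (vscal a x).
Proof.
  intros [hx [Hx ->]]. exists (fun j => vscal a (hx j)).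
  split; [intros j Hj; apply H_subspace; auto | symmetry; apply sumV_scal].
Qed.

Lemma inHJ_opp (J : list nat) (x : V) : inHJ H J x -> inHJ H J (vopp x).
Proof. rewrite vopp_scal. apply inHJ_scal. Qed.

Lemma inHJ_sub (J : list nat) (x y : V) :
  inHJ H J x -> inHJ H J y -> inHJ H J (vsub x y).
Proof. intros. apply inHJ_add; auto. now apply inHJ_opp. Qed.

Lemma inHJ_single (J : list nat) (j : nat) (x : V) :
  NoDup J -> In j J -> H j x -> inHJ H J x.
Proof.
  intros HND Hj Hx. exists (fun k => if Nat.eqb k j then x else vzero). split.
  - intros k _. destruct (Nat.eqb_spec k j); subst; auto. apply H_subspace.
  - induction J as [|a J IH]; [destruct Hj|]. inversion HND; subst. simpl.
    destruct (Nat.eqb_spec a j) as [->|Hne].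
    + rewrite sumV_zero, vadd_0; auto.
      intros k Hk. destruct (Nat.eqb_spec k j); subst; tauto.
    + destruct Hj as [|Hj]; [congruence|]. rewrite <- IH by auto.
      now rewrite vadd_0_l.
Qed.

Lemma inHJ_sumV (J L : list nat) (F : nat -> V) :
  NoDup J -> (forall j, In j L -> In j J /\ H j (F j)) -> inHJ H J (sumV L F).
Proof.
  intros HND. induction L as [|a L IH]; simpl; intros HL; [apply inHJ_zero|].
  destruct (HL a) as [Ha HFa]; auto.
  apply inHJ_add; [now apply inHJ_single with a | apply IH; auto].
Qed.

Lemma inHJ_sumV_self (J : list nat) (F : nat -> V) :
  (forall j, In j J -> H j (F j)) -> inHJ H J (sumV J F).
Proof. intros HF. now exists F. Qed.

Lemma neg_ip_le_rho (q qstar : nat) (rho : R) (J1 J2 : list nat) (g h : V) :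
  (forall c, rho_set q qstar H c -> c <= rho) ->
  index_set q J1 -> index_set q J2 -> (forall j, In j J1 -> ~ In j J2) ->
  (length J1 <= qstar)%nat -> (length J2 <= qstar)%nat ->
  inHJ H J1 g -> inHJ H J2 h ->
  - ip g h <= rho * norm g * norm h.
Proof.
  intros Hub HJ1 HJ2 Hdisj Hl1 Hl2 Hg Hh.
  apply neg_ip_le_of_correlation; [apply Hub; now left|].
  intros Hg0 Hh0. apply Hub. right. exists J1, J2, g, (vopp h).
  split; [exact HJ1|]. split; [exact HJ2|].
  repeat split; auto using inHJ_opp.
  intro E. apply Hh0. now rewrite <- (vadd_opp h), E, vadd_0.
Qed.

End SumSpaces.

Theorem proposition1 (V : IPS) (q qstar : nat) (H : nat -> V -> Prop)
  (fj : nat -> V) (J0 : list nat) (Pi : list nat -> V -> V)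
  (rho kappa : R) (J : list nat) :
  (1 <= q)%nat ->
  (forall j, is_subspace (H j)) ->
  (forall j, (1 <= j <= q)%nat -> H j (fj j)) ->
  is_J0 q fj J0 ->
  (length J0 <= qstar)%nat ->
  is_proj_family q qstar H Pi ->
  is_lub (rho_set q qstar H) rho ->
  rho < 1 ->
  index_set q J ->
  (length J <= qstar)%nat ->
  ldiff J0 J <> nil ->
  is_min (kappa_set fj J0 (length (ldiff J0 J))) kappa ->
  let f := sumV (seq 1 q) fj in
  norm (Pi J0 f) ^ 2 - norm (Pi J f) ^ 2 = norm (vsub f (Pi J f)) ^ 2 /\
  norm (vsub f (Pi J f)) ^ 2 >= (1 - rho ^ 2) * kappa.
Proof.
  intros _ Hsub Hfj HJ0 Hl0 Hproj [Hrho _] Hrho1 HJ HlJ _ [_ Hkappa] f.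
  pose proof (is_J0_index_set V q fj J0 HJ0) as IJ0.
  assert (HfJ0 : forall j, In j J0 -> H j (fj j)) by (intros j Hj; apply Hfj, IJ0, Hj).
  assert (Ef : f = sumV J0 fj) by now apply sumV_J0.
  destruct (Hproj J0 IJ0 ltac:(lia) f) as [HP0 Horth0].
  destruct (Hproj J HJ ltac:(lia) f) as [HP Horth].
  split.
  { rewrite (orth_proj_fixed V (inHJ H J0) f (Pi J0 f)); auto.
    - apply norm_sq_sub_proj, Horth, HP.
    - apply inHJ_sub; auto. rewrite Ef. now apply inHJ_sumV_self. }
  set (fJ := sumV (filter (fun j => existsb (Nat.eqb j) J) J0) fj).
  set (g := sumV (ldiff J0 J) fj).
  set (h := vsub fJ (Pi J f)).
  assert (Ed : vsub f (Pi J f) = vadd g h).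
  { unfold h, vsub. rewrite Ef, (sumV_filter V (fun j => existsb (Nat.eqb j) J)).
    fold fJ g. rewrite (vadd_comm fJ). symmetry. apply vadd_assoc. }
  assert (Hkg : kappa <= norm g ^ 2).
  { apply Hkappa. exists (ldiff J0 J).
    repeat split; [apply ldiff_NoDup, IJ0 | apply ldiff_incl]. }
  assert (Hcorr : - ip g h <= rho * norm g * norm h).
  { apply (neg_ip_le_rho V H Hsub q qstar rho (ldiff J0 J) J); auto.
    - now apply index_set_ldiff.
    - intros j Hj. now apply In_ldiff in Hj.
    - pose proof (ldiff_length J0 J). lia.
    - apply inHJ_sumV_self. intros j Hj. apply HfJ0, (ldiff_incl J0 J), Hj.
    - apply inHJ_sub; auto. apply inHJ_sumV; [auto | exact (proj1 HJ) |].
      intros j Hj. apply filter_In in Hj. rewrite existsb_eqb_In in Hj. intuition. }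
  assert (rho0 : 0 <= rho) by (apply Hrho; now left).
  rewrite Ed. apply Rle_ge, Rle_trans with ((1 - rho ^ 2) * norm g ^ 2).
  - apply Rmult_le_compat_l; nra.
  - now apply norm_add_sq_ge.
Qed.
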